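(* Let $0<\epsilon<\frac18$. For $M>1$ let $m_1<m_2<\cdots<m_l$ be all integers in $[M,(1+\frac1{\log M})M]$ all of whose prime power divisors $p^a$ ($p$ prime, $a\ge1$) satisfy $p^a\le M^{1/4-\epsilon}$, and let $P=\operatorname{lcm}\{p^a:\ p \text{ prime},\ a\ge1,\ p^a\le M^{1/4-\epsilon}\}$. Then there is a constant $C=C(\epsilon)>0$ such that for all sufficiently large $M$ and every real $h$, at least one of the following holds, where $I=(h-M^{3/4},h+M^{3/4})$: 1. at least $CM^{3/4}$ of the $m_i$ do not divide any integer in $I$; 2. some integer in $I$ is divisible by $P$. *)

From Stdlib Require Import Bool Reals ZArith Znumtheory List Lia Lra.
Open Scope R_scope.

Definition is_prime_power (q : Z) : Prop :=
  exists p a : Z, prime p /\ (1 <= a)%Z /\ q = (p ^ a)%Z.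

Definition Zrange1 (K : Z) : list Z :=
  map (fun k => Z.of_nat (S k)) (seq 0 (Z.to_nat K)).

Definition prime_power_b (q : Z) : bool :=
  existsb (fun p =>
    andb (if prime_dec p then true else false)
    (existsb (fun a => Z.eqb (p ^ a) q) (Zrange1 q)))
    (Zrange1 q).

Definition thr (eps M : R) : R := Rpower M (1/4 - eps).

Definition smooth (eps M : R) (m : Z) : Prop :=
  forall q : Z, is_prime_power q -> (q | m)%Z -> IZR q <= thr eps M.

Definition is_mi (eps M : R) (m : Z) : Prop :=
  M <= IZR m /\ IZR m <= (1 + 1 / ln M) * M /\ smooth eps M m.

(* P = lcm of all prime powers p^a <= M^(1/4-eps)
   (all of them lie in [1, floor (M^(1/4-eps))]) *)
Definition lcm_list (l : list Z) : Z := fold_right Z.lcm 1%Z l.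

Definition bigP (eps M : R) : Z :=
  lcm_list (filter prime_power_b (Zrange1 (Int_part (thr eps M)))).

Definition in_I (M h : R) (n : Z) : Prop :=
  h - Rpower M (3/4) < IZR n < h + Rpower M (3/4).

From Stdlib Require Import Reals ZArith Znumtheory Zpow_facts List Lia Lra Classical ClassicalEpsilon.
From mathcomp Require all_boot zify.
Open Scope R_scope.

(* Let T = M^(1/4-eps).  Choose j disjoint ranges of primes in (v0, T], v0 = M^alpha, each
   containing at least v0 primes (Chebyshev: pi(x) ln x >= (x - 1) ln 2 / 2), and consider the
   products g of one prime from each range: there are at least v0^j >= 2 M^(3/4) of them, and
   2 M^(3/4) <= g <= M / (4 T ln M).  Each prime power q = l^a <= T not dividing g completes g
   to some m_i = g b z, with b = q 2^k in (T/2, T] and z < v0 odd and prime to l.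
   If, for some g, all these completions divide integers of I, those integers coincide since g
   exceeds the length of I, and that integer is divisible by every q, hence by P.  Otherwise each
   g has a completion m dividing no integer of I.  The prime factors of m above v0 are those of g
   and possibly l, so m completes at most two of the g, which leaves M^(3/4) distinct such m. *)

(** * Chebyshev's lower bound for the prime-counting function *)

Definition isprimeb (p : Z) : bool := if prime_dec p then true else false.

Definition prime_count (N : Z) : nat := length (filter isprimeb (Zrange1 N)).

Module Chebyshev.
Import all_boot zify.
Local Open Scope nat_scope.

Lemma exp2_le_bin_mid n : 2 ^ n <= 'C(n.*2, n).
Proof.
elim: n => [|n IH] //.
have mid_sym : 'C(n.*2.+1, n.+1) = 'C(n.*2.+1, n).
  by rewrite -[in RHS]bin_sub; [congr 'C(_, _); lia | lia].
have step : 2 ^ n <= 'C(n.*2.+1, n) by apply: leq_trans IH (leq_bin2l _ _).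
by rewrite doubleS binS mid_sym expnS mul2n -addnn leq_add.
Qed.

Lemma divn_double_le n d : 0 < d -> n.*2 %/ d <= (n %/ d).*2 + 1.
Proof.
move=> d_gt0; suff : n.*2 %/ d < (n %/ d).*2 + 2 by lia.
by rewrite ltn_divLR // -!mul2n; nia.
Qed.

Lemma sum_indicator_le N t : \sum_(1 <= k < N) (k <= t) <= t.
Proof.
suff bound K : \sum_(1 <= k < K.+1) (k <= t) <= minn t K.
  case: N => [|N]; first by rewrite big_geq.
  exact: leq_trans (bound N) (geq_minl _ _).
elim: K => [|K IH]; first by rewrite big_geq.
by rewrite big_nat_recr //=; case: (leqP K.+1 t) => /= _; lia.
Qed.

Lemma bin_mid_fact n : 'C(n.*2, n) * (n`! * n`!) = (n.*2)`!.
Proof. by have := bin_fact (leq_addr n n); rewrite addnn; have -> : n.*2 - n = n by lia. Qed.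

(* By Legendre's formula the p-adic valuation of 'C(2n, n) is the sum over k >= 1 of
   (2n %/ p^k) - 2 (n %/ p^k), a sum of terms in {0, 1} that vanish once p^k > 2n. *)
Lemma expn_logn_bin_mid_le p n : prime p -> 0 < n -> p ^ logn p 'C(n.*2, n) <= n.*2.
Proof.
move=> p_pr n_gt0; have p_gt1 := prime_gt1 p_pr.
have bin_gt0 : 0 < 'C(n.*2, n) by rewrite bin_gt0 -addnn leq_addr.
have legendre : logn p 'C(n.*2, n) + (logn p n`! + logn p n`!) = logn p (n.*2)`!.
  by rewrite -bin_mid_fact lognM ?muln_gt0 ?fact_gt0 // lognM ?fact_gt0.
rewrite !logn_fact // in legendre.
have widen : \sum_(1 <= k < n.+1) n %/ p ^ k = \sum_(1 <= k < n.*2.+1) n %/ p ^ k.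
  rewrite [RHS](big_cat_nat _ (n := n.+1)) //=; last by lia.
  rewrite [X in _ = _ + X]big1_seq ?addn0 // => k /andP[_].
  rewrite mem_index_iota => /andP[lt_nk _].
  by apply: divn_small; apply: leq_trans lt_nk (ltnW (ltn_expl _ p_gt1)).
set t := trunc_log p n.*2.
have termwise : \sum_(1 <= k < n.*2.+1) n.*2 %/ p ^ k <=
                \sum_(1 <= k < n.*2.+1) ((n %/ p ^ k).*2 + (k <= t)).
  apply: leq_sum => k _; case: (leqP k t) => [_|lt_tk].
    by apply: divn_double_le; rewrite expn_gt0 ltnW.
  rewrite divn_small //; apply: leq_trans (trunc_log_ltn _ p_gt1) _.
  by rewrite leq_exp2l.
rewrite big_split /= -(big_morph double doubleD (id2 := 0) (erefl 0)) -widen in termwise.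
have indicator_le := sum_indicator_le n.*2.+1 t.
have le_logt : logn p 'C(n.*2, n) <= t by lia.
apply: leq_trans (trunc_logP p_gt1 _); first by rewrite leq_exp2l.
by rewrite double_gt0.
Qed.

Definition prime_pi N := \sum_(0 <= p < N.+1) prime p.

Lemma bin_mid_le_prime_pi n : 0 < n -> 'C(n.*2, n) <= n.*2 ^ prime_pi n.*2.
Proof.
move=> n_gt0; set C := 'C(n.*2, n).
have C_gt0 : 0 < C by rewrite bin_gt0 -addnn leq_addr.
have logn_small p : n.*2 < p -> logn p C = 0.
  move=> lt_np; case p_pr: (prime p); last by rewrite lognE p_pr.
  have := expn_logn_bin_mid_le _ _ p_pr n_gt0; rewrite -/C.
  case: (logn p C) => // k le_pk; exfalso.
  have : p <= p ^ k.+1 by rewrite -{1}(expn1 p) leq_exp2l ?prime_gt1.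
  lia.
have factor : C = \prod_(0 <= p < (C + n.*2).+1 | p \in predT) p ^ logn p C.
  by rewrite -widen_partn ?leq_addr // partnT.
rewrite {1}factor (big_cat_nat _ (n := n.*2.+1)) //=; last by lia.
rewrite [X in _ * X]big1_seq ?muln1; last first.
  by move=> p /andP[_]; rewrite mem_index_iota => /andP[lt_np _]; rewrite logn_small.
rewrite /prime_pi expn_sum; apply: leq_prod => p _.
case p_pr: (prime p); last by rewrite lognE p_pr.
by rewrite expn1; apply: expn_logn_bin_mid_le.
Qed.

Lemma prime_Z_of_nat p : Znumtheory.prime (Z.of_nat p) <-> prime p.
Proof.
split.
- move=> p_pr; have p_gt1 : (1 < Z.of_nat p)%Z by case: p_pr.
  apply/primeP; split; first by apply/ltP; lia.
  move=> d /dvdnP [k def_p].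
  have : (Z.of_nat d | Z.of_nat p)%Z by exists (Z.of_nat k); rewrite def_p; lia.
  by move/(prime_divisors _ p_pr) => [|[|[|]]] ?; apply/orP; [lia | left | right | lia]; apply/eqP; lia.
- move=> p_pr; apply/prime_alt; split; first by have := prime_gt1 p_pr; move/ltP; lia.
  move=> d d_range [k def_p]; have k_ge0 : (0 <= k)%Z by nia.
  have : Z.to_nat d %| p.
    apply/dvdnP; exists (Z.to_nat k).
    by rewrite -multE -Z2Nat.inj_mul ?def_p ?Nat2Z.id //; lia.
  by move/primeP: p_pr => [_ /[apply] /orP [] /eqP]; lia.
Qed.

Lemma isprimeb_Z_of_nat p : isprimeb (Z.of_nat p) = prime p.
Proof.
rewrite /isprimeb; case: prime_dec => [/prime_Z_of_nat -> // | not_pr].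
by apply/esym/negP => /prime_Z_of_nat.
Qed.

Lemma prime_pi_prime_count N : prime_pi N = prime_count (Z.of_nat N).
Proof.
rewrite /prime_count /Zrange1 Nat2Z.id.
elim: N => [|N IH]; first by rewrite /prime_pi big_nat1.
rewrite /prime_pi big_nat_recr // -/(prime_pi N) IH (List.seq_S N 0).
rewrite List.map_app List.filter_app List.length_app /= -isprimeb_Z_of_nat.
by case: isprimeb => /=; lia.
Qed.

Lemma chebyshev_nat n : (0 < n)%coq_nat ->
  (Nat.pow 2 n <= Nat.pow (2 * n)%coq_nat (prime_count (Z.of_nat (2 * n)%coq_nat)))%coq_nat.
Proof.
move/ltP=> n_gt0; have expn_pow m k : m ^ k = Nat.pow m k.
  by elim: k => //= k IH; rewrite expnS IH multE.
rewrite -!expn_pow multE mul2n -prime_pi_prime_count.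
by apply/leP; apply: leq_trans (exp2_le_bin_mid n) (bin_mid_le_prime_pi _ n_gt0).
Qed.

End Chebyshev.

Lemma ln_le x y : 0 < x -> x <= y -> ln x <= ln y.
Proof. intros hx [lt | ->]; [left; apply ln_increasing |]; lra. Qed.

Definition Zrange_oc (a b : Z) : list Z :=
  map (fun k => Z.of_nat (S k)) (seq (Z.to_nat a) (Z.to_nat b - Z.to_nat a)).

Lemma in_Zrange1 K x : In x (Zrange1 K) <-> (1 <= x <= K)%Z.
Proof.
unfold Zrange1; rewrite in_map_iff; split.
- intros [k [<- hk]]; apply in_seq in hk; lia.
- intros hx; exists (Z.to_nat x - 1)%nat; rewrite in_seq; lia.
Qed.

Lemma in_Zrange_oc a b x : (0 <= a)%Z -> In x (Zrange_oc a b) <-> (a < x <= b)%Z.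
Proof.
intros ha; unfold Zrange_oc; rewrite in_map_iff; split.
- intros [k [<- hk]]; apply in_seq in hk; lia.
- intros hx; exists (Z.to_nat x - 1)%nat; rewrite in_seq; lia.
Qed.

Lemma Zrange_oc_NoDup a b : NoDup (Zrange_oc a b).
Proof.
apply NoDup_map_NoDup_ForallPairs; [| apply seq_NoDup].
intros x y _ _ e; lia.
Qed.

Lemma prime_count_app a b : (0 <= a <= b)%Z ->
  prime_count b = (prime_count a + length (filter isprimeb (Zrange_oc a b)))%nat.
Proof.
intros hab; unfold prime_count, Zrange1, Zrange_oc.
rewrite <- length_app, <- filter_app, <- map_app, <- seq_app.
do 5 f_equal; lia.
Qed.

Lemma prime_count_le a : (0 <= a)%Z -> (prime_count a <= Z.to_nat a)%nat.
Proof.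
intros ha; unfold prime_count, Zrange1.
eapply Nat.le_trans; [apply filter_length_le |].
now rewrite length_map, length_seq.
Qed.

Lemma prime_count_lower_bound N : (2 <= N)%Z ->
  (IZR N - 1) / 2 * ln 2 <= INR (prime_count N) * ln (IZR N).
Proof.
intros hN.
set (n := Z.to_nat (N / 2)).
assert (hn : (1 <= n)%nat /\ (2 * Z.of_nat n <= N <= 2 * Z.of_nat n + 1)%Z).
{ unfold n; rewrite Z2Nat.id by (apply Z.div_pos; lia).
  pose proof (Z.div_mod N 2); pose proof (Z.mod_pos_bound N 2).
  assert (1 <= N / 2)%Z by (apply Z.div_le_lower_bound; lia). lia. }
pose proof (Chebyshev.chebyshev_nat n ltac:(lia)) as cheb.
apply le_INR in cheb; rewrite !pow_INR in cheb.
assert (h2n : 0 < INR (2 * n)) by (apply lt_0_INR; lia).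
apply ln_le in cheb; [| apply pow_lt; simpl; lra].
rewrite ln_pow in cheb by (simpl; lra); rewrite ln_pow in cheb by exact h2n.
assert (count_mono : INR (prime_count (Z.of_nat (2 * n))) <= INR (prime_count N)).
{ apply le_INR; rewrite (prime_count_app (Z.of_nat (2 * n)) N) by lia; lia. }
assert (ln_mono : 0 <= ln (INR (2 * n)) <= ln (IZR N)).
{ rewrite INR_IZR_INZ; split.
  - rewrite <- ln_1; apply ln_le; [lra |]; apply IZR_le; lia.
  - apply ln_le; [rewrite <- INR_IZR_INZ; lra |]; apply IZR_le; lia. }
assert (half : (IZR N - 1) / 2 <= INR n).
{ rewrite INR_IZR_INZ; assert (IZR N <= 2 * IZR (Z.of_nat n) + 1)
    by (rewrite <- mult_IZR, <- plus_IZR; apply IZR_le; lia). lra. }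
pose proof ln_lt_2; pose proof (pos_INR (prime_count N)).
simpl (INR 2) in cheb.
apply Rle_trans with (INR n * ln 2); [apply Rmult_le_compat_r; lra |].
apply Rle_trans with (1 := cheb).
apply Rle_trans with (INR (prime_count N) * ln (INR (2 * n))); [apply Rmult_le_compat_r |
  apply Rmult_le_compat_l]; lra.
Qed.

Lemma Int_part_le_mono x y : x <= y -> (Int_part x <= Int_part y)%Z.
Proof.
intros hxy; pose proof (base_Int_part x); pose proof (base_Int_part y).
assert (IZR (Int_part x) < IZR (Int_part y + 1)) by (rewrite plus_IZR; lra).
apply lt_IZR in H1; lia.
Qed.

Lemma primes_in_range_ge lo hi : 2 <= lo -> 1 <= hi -> 8 * lo * ln hi + 2 * lo <= hi ->
  lo <= INR (length (filter isprimeb (Zrange_oc (Int_part lo) (Int_part hi)))).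
Proof.
intros hlo hhi1 hhi.
pose proof (base_Int_part lo) as [A_le A_gt]; pose proof (base_Int_part hi) as [B_le B_gt].
set (A := Int_part lo) in *; set (B := Int_part hi) in *.
assert (ln_hi : 0 <= ln hi) by (rewrite <- ln_1; apply ln_le; lra).
assert (hA : (1 < A)%Z) by (apply lt_IZR; simpl; lra).
assert (hB : (2 <= B)%Z) by (assert (1 < IZR B) by nra; apply lt_IZR in H; lia).
assert (hB' : 2 <= IZR B) by (apply IZR_le; lia).
assert (hAB : (A <= B)%Z) by (apply Int_part_le_mono; nra).
assert (ln_B : 0 < ln (IZR B) <= ln hi).
{ split; [rewrite <- ln_1; apply ln_increasing | apply ln_le]; lra. }
assert (count_A : INR (prime_count A) <= IZR A).
{ rewrite INR_IZR_INZ; apply IZR_le; pose proof (prime_count_le A); lia. }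
assert (count_B : 2 * lo <= INR (prime_count B)).
{ pose proof (prime_count_lower_bound B hB); pose proof ln_lt_2; pose proof (pos_INR (prime_count B)).
  assert ((IZR B - 1) / 2 * / 2 <= (IZR B - 1) / 2 * ln 2) by (apply Rmult_le_compat_l; lra).
  assert (lo * ln (IZR B) <= lo * ln hi) by (apply Rmult_le_compat_l; lra).
  apply Rmult_le_reg_r with (ln (IZR B)); lra. }
rewrite (prime_count_app A B) in count_B by lia; rewrite plus_INR in count_B; lra.
Qed.

Definition Zprod (t : list Z) : Z := fold_right Z.mul 1%Z t.

Lemma divide_Zprod x t : In x t -> (x | Zprod t)%Z.
Proof.
induction t as [|y t IH]; simpl; [easy |].
intros [<- | hx]; [apply Z.divide_factor_l |].
apply Z.divide_mul_r, IH, hx.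
Qed.

Lemma Zprod_pos t : Forall (fun x => 0 < x)%Z t -> (0 < Zprod t)%Z.
Proof. induction 1; simpl; lia. Qed.

Lemma prime_divide_Zprod p t : prime p -> Forall prime t -> (p | Zprod t)%Z -> In p t.
Proof.
intros hp; induction 1 as [|x t hx _ IH]; simpl; intros hdiv.
- apply Z.divide_1_r in hdiv; destruct hp; lia.
- destruct (prime_mult p hp _ _ hdiv) as [h | h]; [left | right; auto].
  symmetry; apply prime_div_prime; auto.
Qed.

Lemma Zprod_bounds lo hi t : 0 < lo -> (forall x, In x t -> lo < IZR x <= hi) ->
  lo ^ length t <= IZR (Zprod t) <= hi ^ length t.
Proof.
intros hlo; induction t as [|x t IH]; simpl; intros ht; [lra |].
rewrite mult_IZR; destruct (ht x (or_introl eq_refl)) as [x_lo x_hi].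
destruct IH as [t_lo t_hi]; [intros y hy; apply ht; auto |].
pose proof (pow_le lo (length t)).
split; apply Rmult_le_compat; lra.
Qed.

Lemma exists_prime_divisor n : (1 < n)%Z -> exists p, prime p /\ (p | n)%Z.
Proof.
intros hn; generalize hn; pattern n; apply Z_lt_induction; [clear n hn | lia].
intros n IH hn.
destruct (prime_dec n) as [hp | hp]; [exists n; split; auto; apply Z.divide_refl |].
destruct (not_prime_divide n hn hp) as [d [hd hdn]].
destruct (IH d) as [p [hp' hpd]]; [lia | lia |].
exists p; split; [easy | eapply Z.divide_trans; eauto].
Qed.

Lemma rel_prime_of_no_common_prime x y :
  (forall p, prime p -> (p | x)%Z -> (p | y)%Z -> False) -> rel_prime x y.
Proof.
intros hxy; apply Zgcd_1_rel_prime.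
destruct (Z.eq_dec (Z.gcd x y) 0) as [e | ne].
- apply Z.gcd_eq_0 in e as [-> ->].
  exfalso; apply (hxy 2%Z prime_2); apply Z.divide_0_r.
- pose proof (Z.gcd_nonneg x y).
  destruct (Z.eq_dec (Z.gcd x y) 1) as [e | n1]; [easy | exfalso].
  destruct (exists_prime_divisor (Z.gcd x y)) as [p [hp hpd]]; [lia |].
  apply (hxy p hp); eapply Z.divide_trans; eauto; [apply Z.gcd_divide_l | apply Z.gcd_divide_r].
Qed.

(* [smooth eps M] unfolds to [pp_smooth (thr eps M)]. *)
Definition pp_smooth (T : R) (m : Z) : Prop :=
  forall q, is_prime_power q -> (q | m)%Z -> IZR q <= T.

Lemma pp_smooth_of_le T x : (0 < x)%Z -> IZR x <= T -> pp_smooth T x.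
Proof.
intros hx hxT q hq hqx.
apply Z.divide_pos_le, IZR_le in hqx; [lra | easy].
Qed.

Lemma pp_smooth_mul T x y : rel_prime x y -> pp_smooth T x -> pp_smooth T y -> pp_smooth T (x * y).
Proof.
intros hxy hx hy q hq hqxy.
destruct hq as [p [a [hp [ha ->]]]].
assert (coprime_pow : forall z, ~ (p | z)%Z -> rel_prime (p ^ a) z).
{ intros z hz; apply rel_prime_sym, rel_prime_Zpower_r; [lia |].
  apply rel_prime_sym, prime_rel_prime; auto. }
assert (not_both : (p | x)%Z -> ~ (p | y)%Z).
{ intros px py; destruct hxy as [_ _ h1]; specialize (h1 p px py).
  apply Z.divide_1_r in h1; destruct hp; lia. }
destruct (Zdivide_dec p x) as [px | px].
- apply hx; [exists p, a; auto |].
  apply Gauss with y; [rewrite Z.mul_comm; auto | apply coprime_pow; auto].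
- apply hy; [exists p, a; auto |].
  apply Gauss with x; [auto | apply coprime_pow; auto].
Qed.

Lemma pp_smooth_Zprod T t : NoDup t -> Forall prime t -> Forall (fun x => IZR x <= T) t ->
  pp_smooth T (Zprod t).
Proof.
induction 1 as [|x t hx _ IH]; simpl; intros hp hT.
- intros q hq h1; exfalso; destruct hq as [p [a [hp' [ha ->]]]].
  apply Z.divide_1_r in h1; destruct hp'.
  assert (p ^ 1 <= p ^ a)%Z by (apply Z.pow_le_mono_r; lia); lia.
- inversion hp; inversion hT; subst.
  apply pp_smooth_mul; auto.
  + apply prime_rel_prime; auto; intros hdiv; apply prime_divide_Zprod in hdiv; auto.
  + apply pp_smooth_of_le; auto; destruct H1; lia.
Qed.

Lemma exists_pow2_multiple_between q (T : R) : (1 <= q)%Z -> IZR q <= T ->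
  exists k, (0 <= k)%Z /\ IZR (q * 2 ^ k) <= T < 2 * IZR (q * 2 ^ k).
Proof.
intros hq hqT; pose proof (base_Int_part T) as [Tn_le Tn_gt].
assert (q_Tn : (q <= Int_part T)%Z) by (apply Z.lt_succ_r, lt_IZR; rewrite succ_IZR; lra).
set (d := (Int_part T / q)%Z).
assert (hd : (1 <= d)%Z) by (apply Z.div_le_lower_bound; lia).
destruct (Z.log2_spec d) as [lo hi]; [lia |].
rewrite Z.pow_succ_r in hi by apply Z.log2_nonneg.
pose proof (Z.mul_div_le (Int_part T) q); pose proof (Z.div_mod (Int_part T) q).
pose proof (Z.mod_pos_bound (Int_part T) q).
assert (le_Tn : (q * 2 ^ Z.log2 d <= Int_part T)%Z) by nia.
assert (lt_Tn : (Int_part T + 1 <= 2 * (q * 2 ^ Z.log2 d))%Z) by nia.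
exists (Z.log2 d); split; [apply Z.log2_nonneg |].
apply IZR_le in le_Tn, lt_Tn; rewrite plus_IZR, mult_IZR in lt_Tn; simpl in lt_Tn; lra.
Qed.

Lemma odd_nonmultiple_between A d l : 0 < A -> 4 <= A * d -> prime l ->
  exists z, A <= IZR z <= A * (1 + d) /\ Z.odd z = true /\ ~ (l | z)%Z.
Proof.
intros hA hAd hl.
destruct (archimed A) as [up_gt up_le].
set (o := if Z.odd (up A) then up A else (up A + 1)%Z).
assert (ho : Z.odd o = true /\ A < IZR o <= A + 2).
{ unfold o; destruct (Z.odd (up A)) eqn:E; [split; auto; lra |].
  rewrite Z.odd_add, E, plus_IZR; split; [easy | lra]. }
destruct ho as [o_odd o_bounds].
destruct (Zdivide_dec l o) as [lo | nlo]; [| exists o; split; [lra | auto]].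
exists (o + 2)%Z; rewrite plus_IZR, Z.odd_add, o_odd; split; [lra | split; [easy |]].
intros lo2; assert (l2 : (l | 2)%Z)
  by (replace 2%Z with (o + 2 - o)%Z by ring; now apply Z.divide_sub_r).
apply prime_div_prime in l2; [subst l | easy | apply prime_2].
destruct lo as [c ->]; rewrite Z.odd_mul, Bool.andb_false_r in o_odd; discriminate.
Qed.

Lemma prime_divide_pow_mul_pow2 p l a k : prime p -> prime l -> (0 <= a)%Z -> (0 <= k)%Z ->
  (p | l ^ a * 2 ^ k)%Z -> p = l \/ p = 2%Z.
Proof.
intros hp hl ha hk hdiv; destruct (prime_mult p hp _ _ hdiv) as [hla | h2k].
- left; now apply prime_power_prime with a.
- right; apply prime_power_prime with k; auto; apply prime_2.
Qed.

Lemma large_prime_factor p g l a k z : prime p -> prime l -> (0 <= a)%Z -> (0 <= k)%Z ->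
  (2 < p)%Z -> (0 < z < p)%Z -> (p | g * (l ^ a * 2 ^ k) * z)%Z -> (p | g)%Z \/ p = l.
Proof.
intros hp hl ha hk p_gt2 hz hdiv.
destruct (prime_mult p hp _ _ hdiv) as [hgb | hpz]; [| apply Z.divide_pos_le in hpz; lia].
destruct (prime_mult p hp _ _ hgb) as [hg | hb]; [now left | right].
destruct (prime_divide_pow_mul_pow2 p l a k hp hl ha hk hb); lia.
Qed.

Lemma in_I_common_divisor_eq M h g n1 n2 : in_I M h n1 -> in_I M h n2 ->
  (g | n1)%Z -> (g | n2)%Z -> 2 * Rpower M (3/4) <= IZR g -> n1 = n2.
Proof.
intros [lo1 hi1] [lo2 hi2] hg1 hg2 hg.
destruct (Z.eq_dec n1 n2) as [e | ne]; [easy | exfalso].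
assert (hdiv : (g | n1 - n2)%Z) by now apply Z.divide_sub_r.
apply Zdivide_bounds, IZR_le in hdiv; [| lia].
rewrite !abs_IZR, minus_IZR in hdiv.
assert (Rabs (IZR n1 - IZR n2) < 2 * Rpower M (3/4)) by (apply Rabs_def1; lra).
pose proof (Rle_abs (IZR g)); lra.
Qed.

Lemma lcm_list_divide l n : (forall x, In x l -> (x | n)%Z) -> (lcm_list l | n)%Z.
Proof.
induction l as [|x l IH]; simpl; intros h; [apply Z.divide_1_l |].
apply Z.lcm_least; auto.
Qed.

Lemma prime_power_b_sound q : prime_power_b q = true -> is_prime_power q.
Proof.
unfold prime_power_b; rewrite existsb_exists; intros [p [_ hp]].
apply andb_prop in hp as [hp ha].
destruct (prime_dec p) as [pp |]; [| discriminate].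
apply existsb_exists in ha as [a [ha e]]; apply Z.eqb_eq in e.
apply in_Zrange1 in ha; exists p, a; auto with zarith.
Qed.

Lemma prime_power_b_2 : prime_power_b 2 = true.
Proof.
apply existsb_exists; exists 2%Z; split; [apply in_Zrange1; lia |].
destruct (prime_dec 2) as [_ | n]; [easy | now exfalso; apply n, prime_2].
Qed.

(** * Tuples from rows of primes *)

Fixpoint cart (rs : list (list Z)) : list (list Z) :=
  match rs with
  | nil => nil :: nil
  | r :: rs' => flat_map (fun x => map (cons x) (cart rs')) r
  end.

Lemma in_cart rs t : In t (cart rs) <-> Forall2 (@In Z) t rs.
Proof.
revert t; induction rs as [|r rs IH]; intros t; simpl.
- split; [intros [<- | []]; constructor | now inversion 1; left].
- rewrite in_flat_map; split.
  + intros [x [hx ht]]; apply in_map_iff in ht as [t' [<- ht']].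
    constructor; [easy | now apply IH].
  + inversion 1; subst; exists x; split; [easy | apply in_map, IH; auto].
Qed.

Lemma cart_NoDup rs : Forall (@NoDup Z) rs -> NoDup (cart rs).
Proof.
induction 1 as [|r rs hr _ IH]; simpl; [repeat constructor; easy |].
induction hr as [|x r hx _ IHr]; simpl; [constructor |].
apply NoDup_app; [| easy |].
- apply NoDup_map_NoDup_ForallPairs; [intros a b _ _ e; now inversion e | easy].
- intros t h1 h2; apply in_map_iff in h1 as [t1 [<- _]].
  apply in_flat_map in h2 as [y [hy h2]]; apply in_map_iff in h2 as [t2 [e _]].
  inversion e; subst; contradiction.
Qed.

Lemma cart_length_ge rs c : 0 <= c -> (forall r, In r rs -> c <= INR (length r)) ->
  c ^ length rs <= INR (length (cart rs)).
Proof.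
intros hc; induction rs as [|r rs IH]; simpl; intros hr; [lra |].
assert (len : length (flat_map (fun x => map (cons x) (cart rs)) r) = (length r * length (cart rs))%nat).
{ clear IH hr; induction r as [|x r IHr]; simpl; [easy |]; now rewrite length_app, length_map, IHr. }
rewrite len, mult_INR; apply Rmult_le_compat; [exact hc | apply pow_le, hc | |].
- apply hr; now left.
- apply IH; intros r' hr'; apply hr; now right.
Qed.

Definition rows_disjoint (rs : list (list Z)) : Prop :=
  forall i k x, (i < length rs)%nat -> (k < length rs)%nat ->
    In x (nth i rs nil) -> In x (nth k rs nil) -> i = k.

Lemma in_cart_nth rs t : In t (cart rs) ->
  length t = length rs /\ forall i, (i < length rs)%nat -> In (nth i t 0%Z) (nth i rs nil).
Proof.
rewrite in_cart; induction 1 as [|x r t rs hx _ [len IH]]; simpl; [split; [easy | lia] |].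
split; [lia |]; intros [|i] hi; [easy | apply IH; lia].
Qed.

Lemma in_cart_row rs t x : In t (cart rs) -> In x t -> exists r, In r rs /\ In x r.
Proof.
rewrite in_cart; induction 1 as [|y r t rs hy _ IH]; simpl; [easy |].
intros [<- | hx]; [exists r; auto | destruct (IH hx) as [r' [hr' hxr']]; exists r'; auto].
Qed.

Section DisjointRows.
Variable rs : list (list Z).
Hypothesis disj : rows_disjoint rs.

Lemma cart_tuple_NoDup t : In t (cart rs) -> NoDup t.
Proof.
intros ht; destruct (in_cart_nth rs t ht) as [len hnth].
apply (NoDup_nth t 0%Z); intros i k hi hk eik.
apply (disj i k (nth i t 0%Z)); try lia; [| rewrite eik]; apply hnth; lia.
Qed.

Lemma cart_incl_pointwise t t' l : In t (cart rs) -> In t' (cart rs) -> incl t' (l :: t) ->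
  forall i, (i < length rs)%nat -> nth i t' 0%Z = nth i t 0%Z \/ nth i t' 0%Z = l.
Proof.
intros ht ht' hincl i hi.
destruct (in_cart_nth rs t ht) as [len hnth], (in_cart_nth rs t' ht') as [len' hnth'].
destruct (hincl (nth i t' 0%Z)) as [e | hin]; [apply nth_In; lia | now right | left].
apply (In_nth t _ 0%Z) in hin as [k [hk ek]].
assert (k = i) as ->
  by (apply (disj k i (nth i t' 0%Z)); try lia; [rewrite <- ek |]; apply hnth || apply hnth'; lia).
now symmetry.
Qed.

Lemma cart_incl_three t1 t2 t3 l : In t1 (cart rs) -> In t2 (cart rs) -> In t3 (cart rs) ->
  incl t2 (l :: t1) -> incl t3 (l :: t1) -> t2 = t1 \/ t3 = t1 \/ t2 = t3.
Proof.
intros h1 h2 h3 i2 i3.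
pose proof (cart_incl_pointwise t1 t2 l h1 h2 i2) as p2.
pose proof (cart_incl_pointwise t1 t3 l h1 h3 i3) as p3.
destruct (in_cart_nth rs t1 h1) as [len1 n1], (in_cart_nth rs t2 h2) as [len2 n2],
  (in_cart_nth rs t3 h3) as [len3 n3].
assert (differs : forall t, length t = length rs -> t <> t1 ->
  exists i, (i < length rs)%nat /\ nth i t 0%Z <> nth i t1 0%Z).
{ intros t len ne; apply NNPP; intros hno; apply ne, nth_ext with 0%Z 0%Z; [lia |].
  intros i hi; apply NNPP; intros hne; apply hno; exists i; split; [lia | easy]. }
destruct (list_eq_dec Z.eq_dec t2 t1) as [e2 | ne2]; [now left |].
destruct (list_eq_dec Z.eq_dec t3 t1) as [e3 | ne3]; [now right; left |].
right; right.
destruct (differs t2 len2 ne2) as [i [hi d2]], (differs t3 len3 ne3) as [k [hk d3]].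
assert (e2 : nth i t2 0%Z = l) by (destruct (p2 i hi); easy).
assert (e3 : nth k t3 0%Z = l) by (destruct (p3 k hk); easy).
assert (only_i : forall t r, In t (cart rs) -> (r < length rs)%nat -> nth r t 0%Z = l -> r = i).
{ intros t r ht hr er; destruct (in_cart_nth rs t ht) as [_ nt].
  apply (disj r i l hr hi); [rewrite <- er; apply nt | rewrite <- e2; apply n2]; easy. }
apply nth_ext with 0%Z 0%Z; [lia |]; intros r hr.
destruct (p2 r ltac:(lia)) as [a2 | a2], (p3 r ltac:(lia)) as [a3 | a3]; try congruence.
- pose proof (only_i t3 r h3 ltac:(lia) a3); pose proof (only_i t3 k h3 hk e3); subst; congruence.
- pose proof (only_i t2 r h2 ltac:(lia) a2); pose proof (only_i t3 k h3 hk e3); subst; congruence.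
Qed.

End DisjointRows.

Lemma fibers_le_two_image {A B : Type} (eqB : forall x y : B, {x = y} + {x <> y})
  (f : A -> B) (l : list A) : NoDup l ->
  (forall a b c, In a l -> In b l -> In c l -> f a = f b -> f a = f c -> a = b \/ a = c \/ b = c) ->
  exists D, NoDup D /\ (forall y, In y D -> exists x, In x l /\ f x = y) /\
    (length l <= 2 * length D)%nat.
Proof.
remember (length l) as n eqn:len; revert l len.
induction n as [n IH] using lt_wf_ind; intros [|x l'] len hnd hfib.
{ exists nil; subst; simpl; split; [constructor | split; [easy | lia]]. }
inversion hnd as [|? ? x_notin nd']; subst.
set (same := fun a => if eqB (f a) (f x) then true else false).
set (other := filter (fun a => negb (same a)) l').
assert (same_le1 : (length (filter same l') <= 1)%nat).
{ destruct (filter same l') as [|a [|b rest]] eqn:E; simpl; try lia; exfalso.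
  assert (nd_same : NoDup (filter same l')) by now apply NoDup_filter.
  rewrite E in nd_same; inversion nd_same as [|? ? ab _]; subst.
  assert (ha : In a (filter same l')) by (rewrite E; now left).
  assert (hb : In b (filter same l')) by (rewrite E; right; now left).
  apply filter_In in ha as [ha fa], hb as [hb fb]; unfold same in fa, fb.
  destruct (eqB (f a) (f x)), (eqB (f b) (f x)); try discriminate.
  destruct (hfib x a b) as [e1 | [e1 | e1]]; simpl; auto; try congruence; subst; auto.
  apply ab; now left. }
assert (other_short : (length other < length (x :: l'))%nat).
{ pose proof (filter_length_le (fun a => negb (same a)) l'); unfold other; simpl; lia. }
destruct (IH (length other) other_short other eq_refl) as [D [nd_D [hD len_D]]].
{ now apply NoDup_filter. }
{ intros a b c ha hb hc; apply filter_In in ha, hb, hc; apply hfib; simpl; tauto. }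
exists (f x :: D); split; [constructor; [| easy] | split].
- intros hin; destruct (hD _ hin) as [a [ha fa]]; apply filter_In in ha as [_ ha].
  unfold same in ha; destruct (eqB (f a) (f x)); easy.
- intros y [<- | hy]; [exists x; simpl; auto |].
  destruct (hD y hy) as [a [ha fa]]; apply filter_In in ha as [ha _]; exists a; simpl; auto.
- pose proof (filter_length same l'); unfold other in len_D; simpl; lia.
Qed.

(** * The dichotomy for admissible rows of primes *)

Lemma cofactor_in_window (M T v0 : R) (g b l : Z) : 1 < M -> 0 < v0 -> prime l ->
  (0 < g)%Z -> (1 <= b)%Z -> IZR b <= T -> T < 2 * IZR b ->
  4 * ln M * IZR g * T <= M -> 2 * M * (1 + 1 / ln M) <= v0 * IZR g * T ->
  exists z, M <= IZR (g * b * z) <= (1 + 1 / ln M) * M /\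
    Z.odd z = true /\ ~ (l | z)%Z /\ (1 <= z)%Z /\ IZR z < v0.
Proof.
intros hM hv0 hl hg hb bT Tb room_above room_below.
assert (lnM : 0 < ln M) by (rewrite <- ln_1; apply ln_increasing; lra).
apply IZR_lt in hg; apply IZR_le in hb.
set (G := IZR g * IZR b); assert (hG : 0 < G) by (unfold G; nra).
set (A := M / G); set (d := 1 / ln M).
assert (hA : 0 < A) by (apply Rdiv_lt_0_compat; lra).
assert (AG : A * G = M) by (unfold A; field; lra).
assert (hAd : 4 <= A * d).
{ apply Rmult_le_reg_r with (G * ln M); [nra |].
  replace (A * d * (G * ln M)) with (A * G) by (unfold d; field; lra); rewrite AG.
  assert (ln M * IZR g * IZR b <= ln M * IZR g * T) by (apply Rmult_le_compat_l; nra).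
  unfold G; lra. }
destruct (odd_nonmultiple_between A d l hA hAd hl) as [z [[z_lo z_hi] [z_odd z_l]]].
exists z; rewrite !mult_IZR; fold G.
assert (hz : (0 < z)%Z) by (apply lt_IZR; lra).
assert (z_v0 : A * (1 + d) < v0).
{ apply Rmult_lt_reg_r with G; [easy |].
  replace (A * (1 + d) * G) with (M * (1 + d)) by (rewrite <- AG; ring).
  assert (v0 * IZR g * T < v0 * IZR g * (2 * IZR b)) by (apply Rmult_lt_compat_l; nra).
  unfold d, G in *; lra. }
split; [split | split; [easy | split; [easy | split; [lia | lra]]]].
- rewrite <- AG; replace (G * IZR z) with (IZR z * G) by ring; apply Rmult_le_compat_r; lra.
- replace ((1 + d) * M) with (A * (1 + d) * G) by (rewrite <- AG; ring).
  replace (G * IZR z) with (IZR z * G) by ring; apply Rmult_le_compat_r; lra.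
Qed.

(* [thr_lt_v0_sq] makes the base of a prime power [l^a <= T] with [a >= 2] smaller than all
   primes of the rows; the two [tuple_room] bounds let some [Zprod t * b * z] with
   [T/2 < b <= T] and [z < v0] land in [[M, (1 + 1/ln M) M]]. *)
Set Implicit Arguments.
Record admissible_rows (eps M v0 : R) (rs : list (list Z)) : Prop := {
  thr_ge2 : 2 <= thr eps M;
  v0_ge2 : 2 <= v0;
  v0_le_thr : v0 <= thr eps M;
  thr_lt_v0_sq : thr eps M < v0 * v0;
  rows_primes : forall r x, In r rs -> In x r -> prime x /\ v0 < IZR x /\ IZR x <= thr eps M;
  rows_disj : rows_disjoint rs;
  rows_NoDup : Forall (@NoDup Z) rs;
  tuple_large : forall t, In t (cart rs) -> 2 * Rpower M (3/4) <= IZR (Zprod t);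
  tuple_room_above : forall t, In t (cart rs) -> 4 * ln M * IZR (Zprod t) * thr eps M <= M;
  tuple_room_below : forall t, In t (cart rs) ->
    2 * M * (1 + 1 / ln M) <= v0 * IZR (Zprod t) * thr eps M;
  many_tuples : 2 * Rpower M (3/4) <= INR (length (cart rs))
}.
Unset Implicit Arguments.

Section Dichotomy.
Variables (eps M h v0 : R) (rs : list (list Z)).
Hypothesis M_gt1 : 1 < M.
Hypothesis adm : admissible_rows eps M v0 rs.

Lemma tuple_primes t x : In t (cart rs) -> In x t ->
  prime x /\ v0 < IZR x /\ IZR x <= thr eps M.
Proof.
intros ht hx; destruct (in_cart_row rs t x ht hx) as [r [hr hxr]].
exact (rows_primes adm r x hr hxr).
Qed.

Lemma tuple_prime_divisor t p : In t (cart rs) -> prime p -> (p | Zprod t)%Z -> In p t.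
Proof.
intros ht hp hdiv; apply prime_divide_Zprod; auto.
apply Forall_forall; intros x hx; apply (tuple_primes t x ht hx).
Qed.

Lemma tuple_odd t : In t (cart rs) -> ~ (2 | Zprod t)%Z.
Proof.
intros ht h2; apply tuple_prime_divisor in h2; [| easy | apply prime_2].
destruct (tuple_primes t 2 ht h2) as [_ [v0_2 _]]; pose proof (v0_ge2 adm); lra.
Qed.

Lemma prime_power_base_coprime t l a : In t (cart rs) -> prime l -> (1 <= a)%Z ->
  IZR (l ^ a) <= thr eps M -> ~ (l ^ a | Zprod t)%Z -> ~ (l | Zprod t)%Z.
Proof.
intros ht hl ha hq hnq hlg.
destruct (Z.eq_dec a 1) as [-> | a_ne1]; [now rewrite Z.pow_1_r in hnq |].
apply (tuple_prime_divisor t l ht hl) in hlg; destruct (tuple_primes t l ht hlg) as [_ [v0l _]].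
assert (l ^ 2 <= l ^ a)%Z by (apply Z.pow_le_mono_r; destruct hl; lia).
apply IZR_le in H; rewrite Z.pow_2_r, mult_IZR in H.
pose proof (thr_lt_v0_sq adm); pose proof (v0_ge2 adm); nra.
Qed.

Lemma tuple_cofactor_smooth t l a k z : In t (cart rs) -> prime l -> (0 <= a)%Z -> (0 <= k)%Z ->
  ~ (l | Zprod t)%Z -> IZR (l ^ a * 2 ^ k) <= thr eps M ->
  Z.odd z = true -> ~ (l | z)%Z -> (1 <= z)%Z -> IZR z < v0 ->
  pp_smooth (thr eps M) (Zprod t * (l ^ a * 2 ^ k) * z).
Proof.
intros ht hl ha hk hlg bT z_odd z_l z_ge1 z_v0.
set (g := Zprod t) in *; set (b := (l ^ a * 2 ^ k)%Z) in *.
assert (prime_gt_z : forall p, prime p -> (p | g)%Z -> (z < p)%Z).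
{ intros p hp hpg; apply (tuple_prime_divisor t p ht hp) in hpg.
  destruct (tuple_primes t p ht hpg) as [_ [v0p _]]; apply lt_IZR; lra. }
assert (b_factors : forall p, prime p -> (p | b)%Z -> p = l \/ p = 2%Z).
{ intros p hp; apply prime_divide_pow_mul_pow2; auto. }
assert (two_nz : ~ (2 | z)%Z).
{ intros [c ->]; rewrite Z.odd_mul, Bool.andb_false_r in z_odd; discriminate. }
assert (cop_gb : rel_prime g b).
{ apply rel_prime_of_no_common_prime; intros p hp hpg hpb.
  destruct (b_factors p hp hpb) as [-> | ->]; [easy | now apply (tuple_odd t ht)]. }
assert (cop_gbz : rel_prime (g * b) z).
{ apply rel_prime_of_no_common_prime; intros p hp hpgb hpz.
  destruct (prime_mult p hp _ _ hpgb) as [hpg | hpb].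
  - apply Z.divide_pos_le in hpz; [| lia]; pose proof (prime_gt_z p hp hpg); lia.
  - destruct (b_factors p hp hpb) as [-> | ->]; contradiction. }
assert (b_pos : (0 < b)%Z).
{ apply Z.mul_pos_pos; apply Z.pow_pos_nonneg; try lia; apply prime_ge_2 in hl; lia. }
pose proof (v0_le_thr adm).
apply pp_smooth_mul; [easy | apply pp_smooth_mul; [easy | |] | apply pp_smooth_of_le; [lia | lra]].
- apply pp_smooth_Zprod.
  + apply (cart_tuple_NoDup rs (rows_disj adm) t ht).
  + apply Forall_forall; intros x hx; apply (tuple_primes t x ht hx).
  + apply Forall_forall; intros x hx; apply (tuple_primes t x ht hx).
- now apply pp_smooth_of_le.
Qed.

Lemma tuple_cofactor t q : In t (cart rs) -> is_prime_power q -> IZR q <= thr eps M ->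
  ~ (q | Zprod t)%Z ->
  exists m l, M <= IZR m <= (1 + 1 / ln M) * M /\ pp_smooth (thr eps M) m /\
    (q | m)%Z /\ (Zprod t | m)%Z /\
    (forall p, prime p -> v0 < IZR p -> (p | m)%Z -> In p t \/ p = l).
Proof.
intros ht [l [a [hl [ha ->]]]] hqT hnq.
assert (hlg : ~ (l | Zprod t)%Z) by now apply prime_power_base_coprime with a.
assert (q_pos : (0 < l ^ a)%Z) by (apply Z.pow_pos_nonneg; [apply prime_ge_2 in hl |]; lia).
destruct (exists_pow2_multiple_between (l ^ a) (thr eps M)) as [k [hk [bT Tb]]]; [lia | easy |].
set (b := (l ^ a * 2 ^ k)%Z) in *.
assert (b_ge1 : (1 <= b)%Z) by (pose proof (Z.pow_pos_nonneg 2 k); unfold b; nia).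
assert (hg : (0 < Zprod t)%Z).
{ apply Zprod_pos, Forall_forall; intros x hx.
  destruct (tuple_primes t x ht hx) as [[x_gt1 _] _]; lia. }
pose proof (v0_ge2 adm).
destruct (cofactor_in_window M (thr eps M) v0 (Zprod t) b l) as [z [bounds [z_odd [z_l [z_ge1 z_v0]]]]];
  auto; try lra; [apply (tuple_room_above adm), ht | apply (tuple_room_below adm), ht |].
exists (Zprod t * b * z)%Z, l; split; [easy | split; [| split; [| split]]].
- apply tuple_cofactor_smooth; auto; lia.
- exists (Zprod t * 2 ^ k * z)%Z; unfold b; ring.
- exists (b * z)%Z; ring.
- intros p hp v0p hpm.
  destruct (large_prime_factor p (Zprod t) l a k z hp hl ltac:(lia) hk) as [hpg | ->]; auto.
  + apply lt_IZR; simpl; lra.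
  + split; [lia |]; apply lt_IZR; lra.
  + left; now apply (tuple_prime_divisor t p ht hp).
Qed.

Definition tagged_by (t : list Z) (m : Z) : Prop :=
  is_mi eps M m /\ ~ (exists n, in_I M h n /\ (m | n)%Z) /\ (Zprod t | m)%Z /\
  exists l, forall p, prime p -> v0 < IZR p -> (p | m)%Z -> In p t \/ p = l.

Lemma tuple_dichotomy t : In t (cart rs) ->
  (exists m, tagged_by t m) \/ (exists n, in_I M h n /\ (bigP eps M | n)%Z).
Proof.
intros ht; set (g := Zprod t); set (T := thr eps M).
set (Qs := filter prime_power_b (Zrange1 (Int_part T))).
assert (Qs_spec : forall q, In q Qs -> is_prime_power q /\ IZR q <= T).
{ intros q hq; apply filter_In in hq as [hq hb]; apply in_Zrange1, proj2, IZR_le in hq.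
  pose proof (base_Int_part T); split; [now apply prime_power_b_sound | lra]. }
destruct (classic (exists m, tagged_by t m)) as [tagged | untagged]; [now left | right].
assert (cofactor_hits : forall q, In q Qs -> ~ (q | g)%Z ->
  exists m n, in_I M h n /\ (q | m)%Z /\ (g | m)%Z /\ (m | n)%Z).
{ intros q hq hnq; destruct (Qs_spec q hq) as [q_pp q_T].
  destruct (tuple_cofactor t q ht q_pp q_T hnq) as [m [l [[m_lo m_hi] [m_smooth [qm [gm tag]]]]]].
  destruct (classic (exists n, in_I M h n /\ (m | n)%Z)) as [[n [hn mn]] | bad]; [exists m, n; auto |].
  exfalso; apply untagged; exists m; repeat split; eauto. }
assert (two_Qs : In 2%Z Qs).
{ apply filter_In; split; [apply in_Zrange1 | apply prime_power_b_2].
  pose proof (thr_ge2 adm); pose proof (base_Int_part T).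
  enough (1 < Int_part T)%Z by lia; apply lt_IZR; unfold T in *; lra. }
destruct (cofactor_hits 2%Z two_Qs (tuple_odd t ht)) as [m0 [n0 [hn0 [_ [gm0 m0n0]]]]].
exists n0; split; [easy |].
apply lcm_list_divide; intros q hq.
destruct (Zdivide_dec q g) as [qg | nqg].
- now apply Z.divide_trans with g; [| apply Z.divide_trans with m0].
- destruct (cofactor_hits q hq nqg) as [m [n [hn [qm [gm mn]]]]].
  assert (n = n0) as <-; [| now apply Z.divide_trans with m].
  apply (in_I_common_divisor_eq M h g n n0 hn hn0);
    [apply Z.divide_trans with m | apply Z.divide_trans with m0 | apply (tuple_large adm)]; easy.
Qed.

Lemma rows_dichotomy :
  (exists L : list Z, NoDup L /\
     (forall m, In m L -> is_mi eps M m /\ ~ (exists n, in_I M h n /\ (m | n)%Z)) /\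
     Rpower M (3/4) <= INR (length L))
  \/ (exists n, in_I M h n /\ (bigP eps M | n)%Z).
Proof.
destruct (classic (exists n, in_I M h n /\ (bigP eps M | n)%Z)) as [hit | miss]; [now right | left].
set (tag := fun t => epsilon (inhabits 0%Z) (tagged_by t)).
assert (tag_spec : forall t, In t (cart rs) -> tagged_by t (tag t)).
{ intros t ht; apply epsilon_spec.
  destruct (tuple_dichotomy t ht) as [tagged | hit]; [easy | contradiction]. }
destruct (fibers_le_two_image Z.eq_dec tag (cart rs)) as [L [nd_L [hL len_L]]].
- apply cart_NoDup, (rows_NoDup adm).
- intros a b c ha hb hc eab eac.
  destruct (tag_spec a ha) as [_ [_ [_ [l hl]]]].
  assert (within : forall t, In t (cart rs) -> tag t = tag a -> incl t (l :: a)).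
  { intros t ht et x hx; destruct (tuple_primes t x ht hx) as [px [v0x _]].
    destruct (tag_spec t ht) as [_ [_ [tm _]]].
    destruct (hl x px v0x) as [xa | ->]; [| now right | now left].
    rewrite <- et; apply Z.divide_trans with (Zprod t); [apply divide_Zprod, hx | easy]. }
  destruct (cart_incl_three rs (rows_disj adm) a b c l ha hb hc
    (within b hb (eq_sym eab)) (within c hc (eq_sym eac))) as [e | [e | e]]; auto.
- exists L; split; [easy | split].
  + intros m hm; destruct (hL m hm) as [t [ht <-]].
    destruct (tag_spec t ht) as [mi [bad _]]; auto.
  + apply le_INR in len_L; rewrite mult_INR in len_L; simpl in len_L.
    pose proof (many_tuples adm); lra.
Qed.

End Dichotomy.

(** * Rows of primes in geometric ranges *)

Definition prime_row (v0 P : R) (i : nat) : list Z :=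
  filter isprimeb (Zrange_oc (Int_part (v0 * P ^ i)) (Int_part (v0 * P ^ S i))).

Definition prime_rows (v0 P : R) (j : nat) : list (list Z) := map (prime_row v0 P) (seq 0 j).

Section PrimeRows.
Variables (v0 P : R) (j : nat).
Hypothesis v0_ge1 : 1 <= v0.
Hypothesis P_ge1 : 1 <= P.

Lemma geometric_le i k : (i <= k)%nat -> v0 * P ^ i <= v0 * P ^ k.
Proof. intros hik; apply Rmult_le_compat_l; [lra | now apply Rle_pow]. Qed.

Lemma in_prime_row i x : In x (prime_row v0 P i) ->
  prime x /\ v0 * P ^ i < IZR x <= v0 * P ^ S i.
Proof.
unfold prime_row; rewrite filter_In; intros [hx hp].
pose proof (geometric_le 0 i ltac:(lia)); simpl in H; rewrite Rmult_1_r in H.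
pose proof (base_Int_part (v0 * P ^ i)) as [lo_le lo_gt].
pose proof (base_Int_part (v0 * P ^ S i)) as [hi_le hi_gt].
apply in_Zrange_oc in hx as [x_lo x_hi]; [| apply le_IZR; simpl; lra].
split; [unfold isprimeb in hp; now destruct prime_dec |].
apply Z.le_succ_l, IZR_le in x_lo; apply IZR_le in x_hi.
rewrite succ_IZR in x_lo; lra.
Qed.

Lemma nth_prime_rows i : (i < j)%nat -> nth i (prime_rows v0 P j) nil = prime_row v0 P i.
Proof.
intros hi; unfold prime_rows.
rewrite (nth_indep _ nil (prime_row v0 P 0)) by (rewrite length_map, length_seq; lia).
now rewrite map_nth, seq_nth.
Qed.

Lemma prime_rows_primes r x : In r (prime_rows v0 P j) -> In x r ->
  prime x /\ v0 < IZR x <= v0 * P ^ j.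
Proof.
unfold prime_rows; rewrite in_map_iff; intros [i [<- hi]] hx; apply in_seq in hi.
destruct (in_prime_row i x hx) as [hp [lo hi']].
pose proof (geometric_le 0 i ltac:(lia)); pose proof (geometric_le (S i) j ltac:(lia)).
simpl in *; split; [easy | lra].
Qed.

Lemma prime_rows_disjoint : rows_disjoint (prime_rows v0 P j).
Proof.
intros i k x hi hk; unfold prime_rows in *; rewrite length_map, length_seq in hi, hk.
rewrite !nth_prime_rows by easy; intros hxi hxk.
destruct (in_prime_row i x hxi) as [_ [i_lo i_hi]], (in_prime_row k x hxk) as [_ [k_lo k_hi]].
destruct (Nat.lt_trichotomy i k) as [lt | [eq | gt]]; [exfalso | easy | exfalso].
- pose proof (geometric_le (S i) k lt); lra.
- pose proof (geometric_le (S k) i gt); lra.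
Qed.

Lemma prime_rows_NoDup : Forall (@NoDup Z) (prime_rows v0 P j).
Proof.
apply Forall_forall; unfold prime_rows; intros r; rewrite in_map_iff; intros [i [<- _]].
apply NoDup_filter, Zrange_oc_NoDup.
Qed.

Lemma prime_row_length_ge i : 2 <= v0 -> 8 * ln (v0 * P ^ S i) + 2 <= P ->
  v0 <= INR (length (prime_row v0 P i)).
Proof.
intros v0_ge2 hP.
pose proof (geometric_le 0 i ltac:(lia)) as lo_ge; simpl in lo_ge; rewrite Rmult_1_r in lo_ge.
apply Rle_trans with (v0 * P ^ i); [easy |].
assert (hi_eq : v0 * P ^ S i = v0 * P ^ i * P) by (simpl; ring).
apply primes_in_range_ge; [lra | rewrite hi_eq; nra |].
rewrite hi_eq at 2.
apply Rmult_le_compat_l with (r := v0 * P ^ i) in hP; lra.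
Qed.

Lemma prime_rows_length : length (prime_rows v0 P j) = j.
Proof. unfold prime_rows; now rewrite length_map, length_seq. Qed.

Lemma prime_rows_tuple_bounds t : In t (cart (prime_rows v0 P j)) ->
  v0 ^ j <= IZR (Zprod t) <= (v0 * P ^ j) ^ j.
Proof.
intros ht; destruct (in_cart_nth _ t ht) as [len _]; rewrite prime_rows_length in len.
rewrite <- len at 1 3; apply Zprod_bounds; [lra |]; intros x hx.
destruct (in_cart_row _ t x ht hx) as [r [hr hxr]].
now destruct (prime_rows_primes r x hr hxr) as [_ bounds].
Qed.

Lemma prime_rows_many_tuples : 2 <= v0 -> 8 * ln (v0 * P ^ j) + 2 <= P ->
  v0 ^ j <= INR (length (cart (prime_rows v0 P j))).
Proof.
intros v0_ge2 hP; rewrite <- prime_rows_length at 1.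
apply cart_length_ge; [lra |]; intros r hr.
unfold prime_rows in hr; apply in_map_iff in hr as [i [<- hi]]; apply in_seq in hi.
apply prime_row_length_ge; [easy |].
pose proof (geometric_le 0 (S i) ltac:(lia)); simpl in H.
assert (ln (v0 * P ^ S i) <= ln (v0 * P ^ j)) by (apply ln_le; [simpl; lra | apply geometric_le; lia]).
lra.
Qed.

End PrimeRows.

Definition good_exponents (θ : R) (j : nat) (α ρ δ : R) : Prop :=
  0 < δ /\ δ <= α /\ δ <= ρ /\
  3/4 + δ <= INR j * α /\
  1 + δ <= (INR j + 1) * α + θ /\
  INR j * (α + INR j * ρ) + θ + δ <= 1 /\
  α + INR j * ρ <= θ /\
  θ + δ <= 2 * α.

(* [j] is the least integer with [j θ > 1 - θ]; [α] is then squeezed between the lower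
   bounds [3/(4j)], [(1-θ)/(j+1)], [θ/2] and the upper bound [(1-θ)/j < θ]. *)
Lemma exponents_exist θ : 1/8 < θ < 1/4 -> exists j α ρ δ, good_exponents θ j α ρ δ.
Proof.
intros hθ.
set (r := (1 - θ) / θ).
assert (hr : 3 < r < 7) by (unfold r; split; apply Rmult_lt_reg_r with θ; field_simplify; lra).
destruct (archimed r) as [up_gt up_le].
exists (Z.to_nat (up r)); unfold good_exponents.
rewrite INR_IZR_INZ, Z2Nat.id by (apply le_IZR; lra).
set (J := IZR (up r)) in *.
assert (Jθ : 1 - θ < J * θ) by (assert (r * θ = 1 - θ) by (unfold r; field; lra); nra).
assert (Jθ2 : J * θ < 2 * (1 - θ)) by (assert (r * θ = 1 - θ) by (unfold r; field; lra); nra).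
set (β := (1 - θ) / J).
set (lo := Rmax (3 / (4 * J)) (Rmax ((1 - θ) / (J + 1)) (θ / 2))).
assert (Jβ : J * β = 1 - θ) by (unfold β; field; lra).
assert (lo_lt : lo < β).
{ unfold lo; repeat apply Rmax_lub_lt; apply Rmult_lt_reg_l with (J * (J + 1) * 4); try nra;
    unfold β; field_simplify; nra. }
assert (lo_ge : 3 / 4 <= J * lo /\ 1 - θ <= (J + 1) * lo /\ θ <= 2 * lo).
{ assert (3 / (4 * J) <= lo) by (apply Rmax_l).
  assert ((1 - θ) / (J + 1) <= lo) by (eapply Rle_trans; [apply Rmax_l | apply Rmax_r]).
  assert (θ / 2 <= lo) by (eapply Rle_trans; [apply Rmax_r | apply Rmax_r]).
  split; [| split]; [replace (3/4) with (J * (3 / (4 * J))) by (field; lra) |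
    replace (1 - θ) with ((J + 1) * ((1 - θ) / (J + 1))) by (field; lra) | ]; nra. }
set (α := (lo + β) / 2).
set (s := Rmin (Rmin (J * α - 3/4) ((J + 1) * α + θ - 1))
               (Rmin (Rmin (1 - θ - J * α) (θ - α)) (Rmin (2 * α - θ) α))).
assert (hs : 0 < s /\ s <= J * α - 3/4 /\ s <= (J + 1) * α + θ - 1 /\ s <= 1 - θ - J * α /\
             s <= θ - α /\ s <= 2 * α - θ /\ s <= α).
{ assert (hα : lo < α < β) by (unfold α; lra).
  assert (J * lo < J * α < J * β) by (split; apply Rmult_lt_compat_l; lra).
  assert ((J + 1) * lo < (J + 1) * α) by (apply Rmult_lt_compat_l; lra).
  assert (β < θ) by (apply Rmult_lt_reg_l with J; lra).
  unfold s, Rmin; repeat destruct Rle_dec; lra. }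
exists α, (s / (2 * (J * J + 1))), (s / (2 * (J * J + 1))).
assert (ρ_le : (J * J + 1) * (s / (2 * (J * J + 1))) = s / 2) by (field; nra).
assert (0 < s / (2 * (J * J + 1))) by (apply Rdiv_lt_0_compat; nra).
repeat split; nra.
Qed.

Lemma log_le_Rpower_eventually δ c : 0 < δ -> 0 <= c ->
  exists M0, forall M, M0 <= M -> 1 < M -> c * ln M <= Rpower M δ.
Proof.
intros hδ hc.
assert (c_δ : 0 <= 2 * c / δ) by (apply Rmult_le_pos; [lra | left; apply Rinv_0_lt_compat; lra]).
set (K := 2 * c / δ + 1).
exists (Rpower K (2 / δ)); intros M hM M_gt1.
set (y := Rpower M (δ / 2)).
assert (Ky : K <= y).
{ replace K with (Rpower (Rpower K (2 / δ)) (δ / 2)).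
  - apply Rle_Rpower_l; [lra | split; [apply exp_pos | easy]].
  - rewrite Rpower_mult; replace (2 / δ * (δ / 2)) with 1 by (field; lra).
    apply Rpower_1; unfold K; lra. }
assert (yy : Rpower M δ = y * y) by (unfold y; rewrite <- Rpower_plus; f_equal; lra).
assert (ln_y : c * ln M = 2 * c / δ * ln y) by (unfold y; rewrite ln_Rpower; field; lra).
assert (ln_lt_y : ln y <= y - 1).
{ pose proof (exp_ineq1_le (ln y)); rewrite exp_ln in H by apply exp_pos; lra. }
rewrite yy, ln_y.
assert (2 * c / δ * ln y <= 2 * c / δ * y) by (apply Rmult_le_compat_l; lra).
assert (K * y <= y * y) by (apply Rmult_le_compat_r; unfold K in *; lra).
unfold K in *; nra.
Qed.

Lemma Rpower_pow_nat M x n : (Rpower M x) ^ n = Rpower M (INR n * x).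
Proof. rewrite <- Rpower_pow by apply exp_pos; rewrite Rpower_mult; f_equal; ring. Qed.

Section LargeM.
Variables (M δ : R).
Hypothesis M_gt1 : 1 < M.
Hypothesis lnM_ge1 : 1 <= ln M.
Hypothesis large : 10 * ln M <= Rpower M δ.

Lemma Rpower_large e : δ <= e -> 10 * ln M <= Rpower M e.
Proof. intros he; apply Rle_trans with (Rpower M δ); [easy | apply Rle_Rpower; lra]. Qed.

Lemma Rpower_large_3_4 e : δ <= e - 3/4 -> 2 * Rpower M (3/4) <= Rpower M e.
Proof.
intros he; replace e with ((e - 3/4) + 3/4) by ring; rewrite Rpower_plus.
apply Rmult_le_compat_r; [left; apply exp_pos | pose proof (Rpower_large _ he); lra].
Qed.

Lemma room_above_of_exponents x a θ : δ <= 1 - (a + θ) -> 0 <= x <= Rpower M a ->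
  4 * ln M * x * Rpower M θ <= M.
Proof.
intros he hx.
assert (split_M : Rpower M (1 - (a + θ)) * Rpower M a * Rpower M θ = M).
{ rewrite <- !Rpower_plus; replace (1 - (a + θ) + a + θ) with 1 by ring; apply Rpower_1; lra. }
pose proof (Rpower_large _ he).
rewrite <- split_M at 3; apply Rmult_le_compat_r; [left; apply exp_pos |].
apply Rmult_le_compat; lra.
Qed.

Lemma room_below_of_exponents x α b θ : δ <= α + b + θ - 1 -> Rpower M b <= x ->
  2 * M * (1 + 1 / ln M) <= Rpower M α * x * Rpower M θ.
Proof.
intros he hx.
assert (split_M : Rpower M α * Rpower M b * Rpower M θ = Rpower M (α + b + θ - 1) * Rpower M 1).
{ rewrite <- !Rpower_plus; f_equal; ring. }
rewrite Rpower_1 in split_M by lra.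
pose proof (Rpower_large _ he).
assert (Rpower M α * Rpower M b * Rpower M θ <= Rpower M α * x * Rpower M θ)
  by (apply Rmult_le_compat_r; [left; apply exp_pos |];
      apply Rmult_le_compat_l; [left; apply exp_pos | easy]).
assert (1 / ln M <= 1) by (unfold Rdiv; rewrite Rmult_1_l, <- Rinv_1; apply Rinv_le_contravar; lra).
nra.
Qed.

Lemma prime_rows_admissible eps j α ρ : good_exponents (1/4 - eps) j α ρ δ ->
  admissible_rows eps M (Rpower M α) (prime_rows (Rpower M α) (Rpower M ρ) j).
Proof.
intros (hδ & δα & δρ & e_large & e_below & e_above & e_top & e_sq).
set (θ := 1/4 - eps) in *; set (J := INR j) in *.
assert (Jρ : 0 <= J * ρ) by (apply Rmult_le_pos; [apply pos_INR | lra]).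
assert (Rpower_le : forall a b, a <= b -> Rpower M a <= Rpower M b) by (intros; apply Rle_Rpower; lra).
assert (v0_ge2 : 2 <= Rpower M α) by (pose proof (Rpower_large α δα); lra).
assert (P_ge : 8 * ln M + 2 <= Rpower M ρ) by (pose proof (Rpower_large ρ δρ); lra).
set (v0 := Rpower M α) in *; set (P := Rpower M ρ) in *; set (rs := prime_rows v0 P j).
assert (top : v0 * P ^ j = Rpower M (α + J * ρ))
  by (unfold v0, P; rewrite Rpower_pow_nat, Rpower_plus; easy).
assert (bounds : forall t, In t (cart rs) ->
  Rpower M (J * α) <= IZR (Zprod t) <= Rpower M (J * (α + J * ρ))).
{ intros t ht; unfold J; rewrite <- !Rpower_pow_nat; fold J; rewrite <- top.
  apply prime_rows_tuple_bounds; [lra | lra | easy]. }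
constructor; unfold thr; fold θ.
- apply Rle_trans with v0; [easy | apply Rpower_le; lra].
- easy.
- apply Rpower_le; lra.
- unfold v0; rewrite <- Rpower_plus; apply Rpower_lt; lra.
- intros r x hr hx; destruct (prime_rows_primes v0 P j ltac:(lra) ltac:(lra) r x hr hx) as [hp [lo hi]].
  split; [easy | split; [easy |]]; rewrite top in hi; apply Rle_trans with (1 := hi), Rpower_le; lra.
- apply prime_rows_disjoint; lra.
- apply prime_rows_NoDup.
- intros t ht; apply Rle_trans with (Rpower M (J * α));
    [apply Rpower_large_3_4; lra | apply bounds, ht].
- intros t ht; destruct (bounds t ht) as [lo hi].
  apply room_above_of_exponents with (J * (α + J * ρ)); [lra | split; [| easy]].
  apply Rle_trans with (2 := lo); left; apply exp_pos.
- intros t ht; apply room_below_of_exponents with (J * α); [lra | apply bounds, ht].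
- apply Rle_trans with (Rpower M (J * α)); [apply Rpower_large_3_4; lra |].
  unfold J; rewrite <- Rpower_pow_nat.
  apply prime_rows_many_tuples; [lra | lra | easy |].
  assert (θ_le1 : θ <= 1) by (assert (0 <= J * (α + J * ρ)) by (apply Rmult_le_pos; nra); lra).
  rewrite top, ln_Rpower.
  assert ((α + J * ρ) * ln M <= ln M)
    by (rewrite <- (Rmult_1_l (ln M)) at 2; apply Rmult_le_compat_r; lra).
  lra.
Qed.

End LargeM.

Theorem lemma4 :
  forall eps : R, 0 < eps < 1/8 ->
  exists C : R, 0 < C /\
  exists M0 : R, forall M : R, 1 < M -> M0 <= M ->
  forall h : R,
    (* 1. at least C M^(3/4) of the m_i divide no integer of I *)
    (exists L : list Z, NoDup L /\
       (forall m, In m L ->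
          is_mi eps M m /\ ~ (exists n : Z, in_I M h n /\ (m | n)%Z)) /\
       C * Rpower M (3/4) <= INR (length L))
    \/
    (* 2. some integer of I is divisible by P *)
    (exists n : Z, in_I M h n /\ (bigP eps M | n)%Z).
Proof.
intros eps heps.
destruct (exponents_exist (1/4 - eps)) as (j & α & ρ & δ & hexp); [lra |].
destruct (log_le_Rpower_eventually δ 10) as [M0 hM0]; [apply hexp | lra |].
exists 1; split; [lra |].
exists (Rmax (exp 1) M0); intros M M_gt1 M_large h.
assert (lnM : 1 <= ln M).
{ rewrite <- (ln_exp 1); apply ln_le; [apply exp_pos |].
  eapply Rle_trans; [apply Rmax_l | exact M_large]. }
assert (big : 10 * ln M <= Rpower M δ).
{ apply hM0; [eapply Rle_trans; [apply Rmax_r | exact M_large] | easy]. }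
destruct (rows_dichotomy eps M h _ _ M_gt1 (prime_rows_admissible M δ M_gt1 lnM big eps j α ρ hexp))
  as [[L [nd_L [hL len_L]]] | hit]; [left | now right].
exists L; rewrite Rmult_1_l; auto.
Qed.
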